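(* Let $\Bbbk$ be a field with $\mathrm{char}(\Bbbk)\ne2$, $n\ge2$, $\mathbb{H}_{2^n}$ the Nichols Hopf algebra and $A$ a unital associative $\Bbbk$-algebra. If $\cdot:\mathbb{H}_{2^n}\otimes A\to A$ is a partial action of $\mathbb{H}_{2^n}$ on $A$ with $g\cdot1_A=1_A$, then $\cdot$ is a global action.
   Context: $\mathbb{H}_{2^n}$ is the Hopf algebra generated by $g,x_1,\dots,x_{n-1}$ with relations $g^2=1$, $x_i^2=0$, $x_ig=-gx_i$, $x_ix_j=-x_jx_i$, $g$ group-like, $\Delta(x_i)=x_i\otimes1+g\otimes x_i$, $\varepsilon(x_i)=0$. A partial action of a bialgebra $H$ on $A$ is a linear map $\cdot:H\otimes A\to A$ with $1_H\cdot a=a$, $h\cdot(ab)=(h_1\cdot a)(h_2\cdot b)$, $h\cdot(k\cdot a)=(h_1\cdot1_A)(h_2k\cdot a)$; it is global if moreover $h\cdot 1_A=\varepsilon(h)1_A$ for all $h$ (equivalently $h\cdot(k\cdot a)=hk\cdot a$). *)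

From HB Require Import structures.
From mathcomp Require Import all_boot all_order all_algebra.
Set Implicit Arguments. Unset Strict Implicit. Unset Printing Implicit Defensive.
Import GRing.Theory.
Local Open Scope ring_scope.

(* The Nichols Hopf algebra H_{2^n} over a field K, realised concretely on its
   standard basis  g^a x_S  (a : bool, S a subset of the generator indices
   {0,...,n-2}, i.e. x_1,...,x_{n-1}), where x_S = x_{i1} x_{i2} ... x_{ik}
   with i1 < i2 < ... < ik. *)

Definition Hidx (n : nat) := (bool * {set 'I_n.-1})%type.

Notation Hn K n := {ffun Hidx n -> (K%type)^o}.
Notation HHn K n := {ffun (Hidx n * Hidx n)%type -> (K%type)^o}.

Section Nichols.
Variables (K : fieldType) (n : nat).

Definition basisH (i : Hidx n) : Hn K n := [ffun j => (j == i)%:R].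
Definition basisHH (p : Hidx n * Hidx n) : HHn K n := [ffun q => (q == p)%:R].

(* product of basis elements:
   g^a x_S * g^b x_T = (-1)^(b|S|) g^(a+b) x_S x_T, and
   x_S x_T = 0 if S,T meet, else (-1)^#{(i,j) | i in S, j in T, j < i} x_(S u T). *)
Definition bmul (i j : Hidx n) : Hn K n :=
  let: (a, S0) := i in let: (b, T0) := j in
  if [disjoint S0 & T0] then
    ((-1) ^+ (b * #|S0| +
       #|[set p : 'I_n.-1 * 'I_n.-1 | (p.1 \in S0) && (p.2 \in T0) && (p.2 < p.1)%N]|))
      *: basisH (addb a b, S0 :|: T0)
  else 0.

Definition mulH (u v : Hn K n) : Hn K n :=
  \sum_i \sum_j (u i * v j) *: bmul i j.

Definition oneH : Hn K n := basisH (false, set0).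

(* the (untwisted) tensor product algebra H (x) H *)
Definition bmulHH (p q : Hidx n * Hidx n) : HHn K n :=
  [ffun r => bmul p.1 q.1 r.1 * bmul p.2 q.2 r.2].

Definition mulHH (U V : HHn K n) : HHn K n :=
  \sum_p \sum_q (U p * V q) *: bmulHH p q.

Definition oneHH : HHn K n := basisHH ((false, set0), (false, set0)).

Definition DeltaG : HHn K n := basisHH ((true, set0), (true, set0)).
Definition DeltaX (i : 'I_n.-1) : HHn K n :=
  basisHH ((false, [set i]), (false, set0)) + basisHH ((true, set0), (false, [set i])).

(* Delta is the algebra map determined by the generators:
   Delta(g^a x_{i1}...x_{ik}) = Delta(g)^a Delta(x_{i1}) ... Delta(x_{ik}) *)
Definition Delta_basis (i : Hidx n) : HHn K n :=
  let: (a, S0) := i in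
  mulHH (if a then DeltaG else oneHH)
        (foldr (fun j acc => mulHH (DeltaX j) acc) oneHH (enum S0)).

Definition Delta (u : Hn K n) : HHn K n := \sum_i u i *: Delta_basis i.

(* counit: eps(g^a x_S) = 1 if S is empty, 0 otherwise *)
Definition epsH (u : Hn K n) : K := u (false, set0) + u (true, set0).

(* A partial action of H_{2^n} on the K-algebra A: a linear map H (x) A -> A,
   written as a bilinear map, with the three partial action axioms
   (Sweedler sums written out in the basis of H (x) H). *)
Definition is_partial_action (A : algType K) (act : Hn K n -> A -> A) : Prop :=
  (forall h k a, act (h + k) a = act h a + act k a) /\
      (forall (c : K) h a, act (c *: h) a = c *: act h a) /\
      (forall h a b, act h (a + b) = act h a + act h b) /\
      (forall h (c : K) a, act h (c *: a) = c *: act h a) /\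
      (forall a, act oneH a = a) /\
      (forall h a b, act h (a * b) =
          \sum_p Delta h p *: (act (basisH p.1) a * act (basisH p.2) b)) /\
      (forall h k a, act h (act k a) =
          \sum_p Delta h p *: (act (basisH p.1) 1 * act (mulH (basisH p.2) k) a)).

Definition is_global_action (A : algType K) (act : Hn K n -> A -> A) : Prop :=
  is_partial_action act /\ (forall h, act h 1 = epsH h *: 1).

Definition gH : Hn K n := basisH (true, set0).

End Nichols.

From HB Require Import structures.
From mathcomp Require Import all_boot all_order all_algebra.
Set Implicit Arguments. Unset Strict Implicit. Unset Printing Implicit Defensive.
Import GRing.Theory.
Local Open Scope ring_scope.

(* Write h.a for act h a.  Multiplicativity gives
     x_i.1 = (x_i.1)(1.1) + (g.1)(x_i.1) = 2 (x_i.1),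
   and the composition axiom gives
     x_i.(k.1) = (x_i.1)(1k.1) + (g.1)(x_ik.1) = x_ik.1   and   g.(k.1) = gk.1.
   Writing a basis element g^a x_S as an ordered product of generators,
   induction on |S| gives g^a x_S.1 = eps(g^a x_S) 1, and linearity in h gives
   h.1 = eps(h) 1. *)

Section FinfunDelta.
Variables (K : fieldType) (I : finType).

Lemma ffun_delta_expand (u : {ffun I -> K^o}) :
  u = \sum_i u i *: [ffun j => (j == i)%:R].
Proof.
apply/ffunP => j; rewrite sum_ffunE (bigD1 j) //= big1 ?addr0.
  by rewrite !ffunE eqxx; symmetry; exact: mulr1.
by move=> i /negbTE ij; rewrite !ffunE eq_sym ij; exact: mulr0.
Qed.

Lemma sum_ffun_delta (V : lmodType K) (i : I) (F : I -> V) :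
  \sum_j ([ffun j => (j == i)%:R] : {ffun I -> K^o}) j *: F j = F i.
Proof.
rewrite (bigD1 i) //= big1 ?addr0; first by rewrite ffunE eqxx scale1r.
by move=> j /negbTE ji; rewrite ffunE ji scale0r.
Qed.

End FinfunDelta.

Section NicholsAlgebra.
Variables (K : fieldType) (n : nat).

Lemma bmul_sorted (a b : bool) (S T : {set 'I_n.-1}) :
    (b -> S = set0) -> {in S & T, forall s t : 'I_n.-1, (s < t)%N} ->
  bmul K (a, S) (b, T) = basisH K (addb a b, S :|: T).
Proof.
move=> bS ST /=.
have -> : [disjoint S & T].
  by apply/pred0P => s /=; apply/andP => -[sS sT]; have := ST s s sS sT; rewrite ltnn.
have -> : (b * #|S|)%N = 0%N by case: b bS => // /(_ isT) ->; rewrite cards0.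
set inv := [set p | _]; have -> : inv = set0.
  apply/setP => -[s t]; rewrite !inE /= -andbA; apply/negbTE/and3P => -[sS tT].
  by rewrite ltnNge (ltnW (ST s t sS tT)).
by rewrite cards0 expr0 scale1r.
Qed.

Lemma bmul1l (j : Hidx n) : bmul K (false, set0) j = basisH K j.
Proof. by case: j => b T; rewrite bmul_sorted ?set0U // => s t; rewrite inE. Qed.

Lemma bmul1r (j : Hidx n) : bmul K j (false, set0) = basisH K j.
Proof.
by case: j => a S; rewrite bmul_sorted ?setU0 ?addbF // => s t _; rewrite inE.
Qed.

Lemma mulH_basis (i j : Hidx n) : mulH (basisH K i) (basisH K j) = bmul K i j.
Proof.
rewrite /mulH (bigD1 i) //= [X in _ + X]big1 ?addr0.
  rewrite (bigD1 j) //= big1 ?addr0; first by rewrite !ffunE !eqxx mulr1 scale1r.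
  by move=> k /negbTE kj; rewrite !ffunE kj mulr0 scale0r.
by move=> k /negbTE ki; apply: big1 => l _; rewrite !ffunE ki mul0r scale0r.
Qed.

Lemma basisH_x_min (S : {set 'I_n.-1}) (i : 'I_n.-1) :
    i \in S -> {in S, forall j : 'I_n.-1, (i <= j)%N} ->
  basisH K (false, S) = mulH (basisH K (false, [set i])) (basisH K (false, S :\ i)).
Proof.
move=> iS i_min; rewrite mulH_basis bmul_sorted ?setD1K //=.
move=> s t /set1P -> /setD1P[ti tS].
by rewrite ltn_neqAle i_min // andbT; apply: contraNneq ti => /val_inj ->.
Qed.

Lemma basisH_gx (S : {set 'I_n.-1}) :
  basisH K (true, S) = mulH (gH K n) (basisH K (false, S)).
Proof. by rewrite mulH_basis bmul_sorted ?set0U // => s t; rewrite inE. Qed.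

Lemma mulHH1l (U : HHn K n) : mulHH (oneHH K n) U = U.
Proof.
rewrite /mulHH (bigD1 ((false, set0), (false, set0))) //= [X in _ + X]big1 ?addr0.
  rewrite [RHS]ffun_delta_expand; apply: eq_bigr => q _.
  rewrite ffunE eqxx mul1r; congr (_ *: _).
  by apply/ffunP => r; rewrite !ffunE !bmul1l !ffunE -natrM mulnb -pair_eqE.
by move=> p /negbTE pn; apply: big1 => q _; rewrite ffunE pn mul0r scale0r.
Qed.

Lemma mulHH1r (U : HHn K n) : mulHH U (oneHH K n) = U.
Proof.
rewrite /mulHH [RHS]ffun_delta_expand; apply: eq_bigr => p _.
rewrite (bigD1 ((false, set0), (false, set0))) //= big1 ?addr0.
  rewrite ffunE eqxx mulr1; congr (_ *: _).
  by apply/ffunP => r; rewrite !ffunE !bmul1r !ffunE -natrM mulnb -pair_eqE.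
by move=> q /negbTE qn; rewrite ffunE qn mulr0 scale0r.
Qed.

Lemma Delta_basisE (i : Hidx n) : Delta (basisH K i) = Delta_basis K i.
Proof. exact: sum_ffun_delta. Qed.

Lemma Delta_xE (i : 'I_n.-1) : Delta (basisH K (false, [set i])) = DeltaX K i.
Proof. by rewrite Delta_basisE /= enum_set1 /= mulHH1r mulHH1l. Qed.

Lemma Delta_gE : Delta (gH K n) = DeltaG K n.
Proof. by rewrite Delta_basisE /= enum_set0 /= mulHH1r. Qed.

Lemma sum_DeltaX (V : lmodType K) (i : 'I_n.-1) (F : Hidx n -> Hidx n -> V) :
  \sum_p DeltaX K i p *: F p.1 p.2 =
  F (false, [set i]) (false, set0) + F (true, set0) (false, [set i]).
Proof.
rewrite -(sum_ffun_delta ((false, [set i]), (false, set0)) (fun p => F p.1 p.2)).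
rewrite -(sum_ffun_delta ((true, set0), (false, [set i])) (fun p => F p.1 p.2)).
by rewrite -big_split; apply: eq_bigr => p _; rewrite ffunE scalerDl.
Qed.

Lemma sum_DeltaG (V : lmodType K) (F : Hidx n -> Hidx n -> V) :
  \sum_p DeltaG K n p *: F p.1 p.2 = F (true, set0) (true, set0).
Proof. exact: (sum_ffun_delta _ (fun p => F p.1 p.2)). Qed.

End NicholsAlgebra.

Section PartialActionOnUnit.
Variables (K : fieldType) (n : nat) (A : algType K) (act : Hn K n -> A -> A).
Hypotheses (act_partial : is_partial_action act) (act_g1 : act (gH K n) 1 = 1).

Let act_addl h k a : act (h + k) a = act h a + act k a.
Proof. by case: act_partial. Qed.
Let act_scalel c h a : act (c *: h) a = c *: act h a.
Proof. by case: act_partial => _ []. Qed.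
Let act_scaler h c a : act h (c *: a) = c *: act h a.
Proof. by case: act_partial => _ [_ [_ []]]. Qed.
Let act_1l a : act (oneH K n) a = a.
Proof. by case: act_partial => _ [_ [_ [_ []]]]. Qed.
Let act_mulr h a b :
  act h (a * b) = \sum_p Delta h p *: (act (basisH K p.1) a * act (basisH K p.2) b).
Proof. by case: act_partial => _ [_ [_ [_ [_ []]]]]. Qed.
Let act_comp h k a :
  act h (act k a) =
    \sum_p Delta h p *: (act (basisH K p.1) 1 * act (mulH (basisH K p.2) k) a).
Proof. by case: act_partial => _ [_ [_ [_ [_ []]]]]. Qed.

Lemma act_suml (I : finType) (F : I -> Hn K n) a :
  act (\sum_i F i) a = \sum_i act (F i) a.
Proof.
have act0l : act 0 a = 0 by rewrite -(scale0r 0) act_scalel scale0r.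
exact: (big_morph (act^~ a) (fun h k => act_addl h k a) act0l).
Qed.

Lemma act_x1 (i : 'I_n.-1) : act (basisH K (false, [set i])) 1 = 0.
Proof.
have := act_mulr (basisH K (false, [set i])) 1 1.
rewrite mulr1 Delta_xE.
rewrite (sum_DeltaX _ (fun p q => act (basisH K p) 1 * act (basisH K q) 1)).
rewrite act_1l act_g1 mul1r mulr1 => /esym/eqP.
by rewrite -subr_eq0 addrK => /eqP.
Qed.

Lemma act_x_act1 (i : 'I_n.-1) (k : Hn K n) :
  act (basisH K (false, [set i])) (act k 1) = act (mulH (basisH K (false, [set i])) k) 1.
Proof.
rewrite act_comp Delta_xE.
rewrite (sum_DeltaX _ (fun p q => act (basisH K p) 1 * act (mulH (basisH K q) k) 1)).
by rewrite act_x1 act_g1 mul0r mul1r add0r.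
Qed.

Lemma act_g_act1 (k : Hn K n) : act (gH K n) (act k 1) = act (mulH (gH K n) k) 1.
Proof.
rewrite act_comp Delta_gE.
rewrite (sum_DeltaG (fun p q => act (basisH K p) 1 * act (mulH (basisH K q) k) 1)).
by rewrite act_g1 mul1r.
Qed.

Lemma act_xS1 (S : {set 'I_n.-1}) :
  act (basisH K (false, S)) 1 = (S == set0)%:R *: 1.
Proof.
move: {2}#|S| (erefl #|S|) => m; elim: m S => [|m IH] S cardS.
  have -> : S = set0 by apply/eqP; rewrite -cards_eq0 cardS.
  by rewrite eqxx scale1r act_1l.
have S_neq0 : S != set0 by rewrite -card_gt0 cardS.
have [i iS i_min] : exists2 i : 'I_n.-1, i \in S & {in S, forall j : 'I_n.-1, (i <= j)%N}.
  by have /set0Pn[i0 /(arg_minnP val)[i]] := S_neq0; exists i.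
have cardSi : #|S :\ i| = m by apply/eqP; rewrite -eqSS -cardS (cardsD1 i S) iS.
rewrite (basisH_x_min K iS i_min) -act_x_act1 IH // act_scaler act_x1 scaler0.
by rewrite (negbTE S_neq0) scale0r.
Qed.

Lemma act_basis1 (i : Hidx n) : act (basisH K i) 1 = (i.2 == set0)%:R *: 1.
Proof.
case: i => [[] S /=]; last exact: act_xS1.
by rewrite basisH_gx -act_g_act1 act_xS1 act_scaler act_g1.
Qed.

Lemma act_eps1 (h : Hn K n) : act h 1 = epsH h *: 1.
Proof.
rewrite [h in LHS]ffun_delta_expand act_suml.
under eq_bigr => i _ do rewrite act_scalel act_basis1 scalerA.
rewrite -scaler_suml (bigD1 (false, set0)) //= (bigD1 (true, set0)) //= big1 ?addr0.
  by rewrite eqxx !mulr1.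
move=> [a S] /andP[] /=; case: (eqVneq S set0) => [-> | _].
  by case: a; rewrite eqxx.
by rewrite mulr0n mulr0.
Qed.

End PartialActionOnUnit.

Theorem proposition4p2 (K : fieldType) (n : nat) (A : algType K)
    (act : Hn K n -> A -> A) :
  (2%:R : K) != 0 -> (2 <= n)%N ->
  is_partial_action act -> act (gH K n) 1 = 1 ->
  is_global_action act.
Proof.
move=> _ _ act_partial act_g1; split => // h.
exact: act_eps1.
Qed.
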